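(* For every integer $k\ge1$, $N(2k+3,k)=3$ if $3\mid k$ and $N(2k+3,k)=1$ if $3\nmid k$.
   Context: For $n>k\ge1$, $N(n,k)$ is the nullity of the $n\times n$ skew-symmetric Toeplitz matrix $A(n,k)$ whose first $k$ superdiagonals have all entries $1$ and whose remaining superdiagonals have all entries $0$. *)

From mathcomp Require Import all_boot all_order all_algebra.
Set Implicit Arguments. Unset Strict Implicit. Unset Printing Implicit Defensive.
Import GRing.Theory Num.Theory.
Local Open Scope ring_scope.

Definition Amat (n k : nat) : 'M[rat]_n :=
  \matrix_(i < n, j < n)
    (if ((i < j)%N && (j <= i + k)%N) then 1
     else if ((j < i)%N && (i <= j + k)%N) then -1 else 0).

Definition Nnull (n k : nat) : nat := (n - \rank (Amat n k))%N.

(* A row vector v is in the left kernel of A(2k+3,k) iff the first entry of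
   vA vanishes and consecutive entries of vA agree.  The latter is a local
   recurrence linking v_t, v_(t+1), v_(t-k) and v_(t+k+1); chasing it shows
   that v is determined by v_0, v_1, v_2, and that v_1, ..., v_k is 3-periodic
   with zero sums of three consecutive terms, a relation that wraps around
   cyclically past v_k.  If 3 | k this is consistent and an explicit basis
   gives nullity 3.  Otherwise the wrap-around forces v_1 = v_2 = 0 once
   v_0 = 0, and the kernel is spanned by the indicator of {0, k+1, 2k+2}. *)

From mathcomp Require Import all_boot all_order all_algebra.
From mathcomp Require Import zify lra.
Set Implicit Arguments. Unset Strict Implicit. Unset Printing Implicit Defensive.
Import GRing.Theory Num.Theory.
Local Open Scope ring_scope.

Ltac case_ifs := repeat (case: ifP => ?; try (exfalso; lia)).

Lemma mxrank_ker_section (F : fieldType) n r (A : 'M[F]_n)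
    (B : 'M[F]_(r, n)) (S : 'M[F]_(n, r)) :
  B *m A = 0 -> B *m S = 1%:M ->
  (forall u : 'rV_n, u *m A = 0 -> u *m S = 0 -> u = 0) ->
  \rank (kermx A) = r.
Proof.
move=> BA0 BS1 sepS.
have kerB : (kermx A <= B)%MS.
  apply/row_subP => i; set u := row i (kermx A).
  have uA0 : u *m A = 0 by rewrite -row_mul mulmx_ker row0.
  suff -> : u = (u *m S) *m B by apply: submxMl.
  apply/eqP; rewrite -subr_eq0; apply/eqP/sepS.
    by rewrite mulmxBl uA0 -(mulmxA (u *m S)) BA0 mulmx0 subrr.
  by rewrite mulmxBl -(mulmxA (u *m S)) BS1 mulmx1 subrr.
apply/eqP; rewrite eqn_leq (leq_trans (mxrankS kerB)) ?rank_leq_row //=.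
rewrite -{1}(mxrank1 F r) -BS1 (leq_trans (mxrankM_maxl _ _)) //.
by apply: mxrankS; rewrite sub_kermx BA0.
Qed.

Lemma mulmx_pid_mx (R : pzSemiRingType) p n r (M : 'M[R]_(p, n)) i (s : 'I_r)
    (rn : (r <= n)%N) :
  (M *m pid_mx r) i s = M i (widen_ord rn s).
Proof.
rewrite mxE (bigD1 (widen_ord rn s)) //= mxE /= eqxx ltn_ord mulr1.
rewrite big1 ?addr0 // => j /negbTE ne; rewrite mxE.
have -> : (j == s :> nat) = false.
  by apply: contraFF ne => /eqP js; apply/eqP/val_inj.
by rewrite mulr0.
Qed.

Lemma pid_mx_coord_eq0 (R : pzSemiRingType) n r (u : 'rV[R]_n.+1) t :
  u *m (pid_mx r : 'M_(n.+1, r)) = 0 -> (r <= n.+1)%N -> (t < r)%N ->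
  u 0 (inord t) = 0.
Proof.
move=> uS0 rn tr; have := congr1 (fun M : 'M_(1, r) => M 0 (Ordinal tr)) uS0.
rewrite mulmx_pid_mx mxE => <-; congr (u 0 _); apply: val_inj.
by rewrite /= inordK // (leq_trans tr rn).
Qed.

Lemma matrix_mul_pid_mx (R : pzSemiRingType) r n (g : 'I_r -> nat -> R) :
  (r <= n)%N -> (forall s s' : 'I_r, g s s' = (s == s')%:R) ->
  (\matrix_(s < r, i < n) g s i) *m pid_mx r = 1%:M.
Proof. by move=> rn gE; apply/matrixP => s s'; rewrite mulmx_pid_mx !mxE gE. Qed.

Definition entryA (k i j : nat) : rat :=
  if (i < j)%N && (j <= i + k)%N then 1
  else if (j < i)%N && (i <= j + k)%N then -1 else 0.

Lemma entryA_succ_sub k i j :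
  entryA k i j.+1 - entryA k i j =
    (if i == j then 1 else 0) + (if i == j.+1 then 1 else 0)
    - (if (k <= j)%N && (i == j - k)%N then 1 else 0)
    - (if i == (k + j.+1)%N then 1 else 0).
Proof. by rewrite /entryA; case_ifs; lra. Qed.

Definition rowA (m k : nat) (w : nat -> rat) (j : nat) : rat :=
  \sum_(i < m.+1) w i * entryA k i j.

Definition drowA (m k : nat) (w : nat -> rat) (j : nat) : rat :=
  w j + w j.+1 - (if (k <= j)%N then w (j - k)%N else 0)
  - (if (k + j.+1 <= m)%N then w (k + j.+1)%N else 0).

Lemma sum_mul_delta n (w : nat -> rat) t :
  \sum_(i < n) w i * (if (i : nat) == t then 1 else 0) = if (t < n)%N then w t else 0.
Proof.
rewrite -(big_ord1_eq +%R w t n) [RHS]big_mkcond.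
by apply: eq_bigr => i _; case: eqP; rewrite ?mulr1 ?mulr0.
Qed.

Lemma rowA_succ_sub m k w j : (j < m)%N ->
  rowA m k w j.+1 - rowA m k w j = drowA m k w j.
Proof.
move=> jm; rewrite /rowA /drowA -sumrB.
under eq_bigr => i _ do rewrite -mulrBr entryA_succ_sub !mulrBr mulrDr.
rewrite !sumrB big_split /= !sum_mul_delta !ltnS (ltnW jm) jm.
case: (leqP k j) => [kj|jk] /=; last by rewrite big1 // => i _; rewrite mulr0.
by rewrite sum_mul_delta ltnS (leq_trans (leq_subr k j) (ltnW jm)).
Qed.

Lemma rowA0 m k w : (k <= m)%N -> rowA m k w 0 = - \sum_(1 <= i < k.+1) w i.
Proof.
move=> km; rewrite /rowA -(big_mkord xpredT (fun i => w i * entryA k i 0)).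
have tail0 : \sum_(k.+1 <= i < m.+1) w i * entryA k i 0 = 0.
  rewrite big_nat_cond big1 // => i /andP[/andP[ki _] _].
  by rewrite /entryA; case_ifs; rewrite mulr0.
rewrite (big_cat_nat (leq0n k.+1)) ?ltnS //= tail0 addr0 big_ltn // mulr0 add0r.
rewrite -sumrN; apply: eq_big_nat => i /andP[i1 ik].
by rewrite /entryA; case_ifs; rewrite mulrN1.
Qed.

Lemma mulmx_Amat_eq0 r m k (w : 'I_r -> nat -> rat) :
  (\matrix_(s < r, i < m.+1) w s i) *m Amat m.+1 k = 0 <->
  (forall s, rowA m k (w s) 0 = 0 /\ forall j, (j < m)%N -> drowA m k (w s) j = 0).
Proof.
have entry s (j : 'I_m.+1) :
    ((\matrix_(s < r, i < m.+1) w s i) *m Amat m.+1 k) s j = rowA m k (w s) j.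
  by rewrite mxE; apply: eq_bigr => i _; rewrite !mxE.
split=> [wA0 s | kerw].
  have rowA_eq0 j : (j <= m)%N -> rowA m k (w s) j = 0.
    by move=> jm; rewrite -(inordK (jm : j < m.+1)%N) -entry wA0 mxE.
  split=> [|j jm]; first exact: rowA_eq0.
  by rewrite -rowA_succ_sub // !rowA_eq0 ?subrr // ltnW.
apply/matrixP => s j; rewrite entry mxE; have [w0 dw0] := kerw s.
move: (ltn_ord j); elim: (nat_of_ord j) => [//|j' IH] j'm.
rewrite -[rowA _ _ _ j'.+1](subrK (rowA m k (w s) j')) rowA_succ_sub //.
by rewrite dw0 // IH ?add0r // ltnW.
Qed.

Lemma row_ker_Amat_rec m k (u : 'rV[rat]_m.+1) : u *m Amat m.+1 k = 0 ->
  forall j, (j < m)%N -> drowA m k (fun t => u 0 (inord t)) j = 0.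
Proof.
have {1}-> : u = \matrix_(s < 1, i < m.+1) u s (inord i).
  by apply/matrixP => s i; rewrite mxE inord_val.
by move/(mulmx_Amat_eq0 _ _ (fun s i => u s (inord i)))/(_ 0) => [].
Qed.

Section KernelRecurrence.

Variables (k : nat) (v : nat -> rat).
Hypothesis k_gt0 : (0 < k)%N.
Hypothesis v_rec : forall j, (j < 2 * k + 2)%N -> drowA (2 * k + 2) k v j = 0.

Lemma rec_low i : (i < k)%N -> v (k + i.+1) = v i + v i.+1.
Proof.
by move=> ik; have := v_rec (j := i) ltac:(lia); rewrite /drowA; case_ifs; lra.
Qed.

Lemma rec_mid0 : v k + v (k + 1) = v 0 + v (k + k.+1).
Proof.
by have := v_rec (j := k) ltac:(lia); rewrite /drowA subnn addn1; case_ifs; lra.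
Qed.

Lemma rec_mid1 : v (k + 1) + v (k + 2) = v 1 + v (k + k.+2).
Proof.
have := v_rec (j := k.+1) ltac:(lia); rewrite /drowA subSnn addn1 (addn2 k).
by case_ifs; lra.
Qed.

Lemma rec_high t : (2 <= t <= k.+1)%N -> v (k + t) + v (k + t.+1) = v t.
Proof.
move=> /andP[t2 tk]; have := v_rec (j := k + t) ltac:(lia).
by rewrite /drowA addKn; case_ifs; rewrite -addnS; lra.
Qed.

Lemma sum3 x : (0 < x)%N -> (x.+2 <= k)%N -> v x + v x.+1 + v x.+2 = 0.
Proof.
move=> x0 xk; have := rec_low (i := x) ltac:(lia).
have := rec_low (i := x.+1) ltac:(lia); have := rec_high (t := x.+1) ltac:(lia).
lra.
Qed.

Lemma v_eq_mod3 s t : (0 < s <= t)%N -> (t <= k)%N -> s = t %[mod 3] -> v t = v s.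
Proof.
elim/ltn_ind: t => t IH /andP[s0 st] tk smod.
have [ts3|ts3] := ltnP t (s + 3); first by have -> : t = s by lia.
have [x tx] : exists x, t = x.+3 by exists (t - 3)%N; lia.
have := sum3 (x := x) ltac:(lia) ltac:(lia).
have := sum3 (x := x.+1) ltac:(lia) ltac:(lia).
rewrite tx (IH x) ?tx //; [lra | lia..].
Qed.

Lemma sum3_wrap_left : (1 < k)%N -> v k.-1 + v k + v 1 = 0.
Proof.
move=> k1; have := rec_high (t := k) ltac:(lia).
have := rec_low (i := k.-1) ltac:(lia); rewrite prednK //.
have := rec_mid0; have := rec_low (i := 0) k_gt0; lra.
Qed.

Lemma sum3_wrap_right : (1 < k)%N -> v k + v 1 + v 2 = 0.
Proof.
move=> k1; have := rec_high (t := k.+1) ltac:(lia); have := rec_mid0; have := rec_mid1.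
have := rec_low (i := 0) k_gt0; have := rec_low (i := 1) k1.
rewrite addn1; lra.
Qed.

Lemma rec_vanish : v 0 = 0 -> v 1 = 0 -> v 2 = 0 ->
  forall t, (t <= 2 * k + 2)%N -> v t = 0.
Proof.
move=> v0 v1 v2.
have low t : (t <= k)%N -> v t = 0.
  elim/ltn_ind: t => -[|[|[|t]]] IH tk //.
  have := sum3 (x := t.+1) isT tk; rewrite (IH t.+1) ?(IH t.+2) //; [lra | lia..].
have high s : (0 < s <= k)%N -> v (k + s) = 0.
  by case: s => [|s] /andP[_ sk] //; rewrite rec_low // !low ?addr0 // ltnW.
have top1 : v (k + k.+1) = 0.
  by have := rec_mid0; rewrite low // high //; lra.
have top2 : v (k + k.+2) = 0.
  have := rec_mid1; rewrite v1 high //.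
  have [k1|k1] := ltnP 1 k; first by rewrite high //; lra.
  have -> : (k + 2 = k + k.+1)%N by lia.
  by rewrite top1; lra.
move=> t t2k; have [tk|kt] := leqP t k; first exact: low.
rewrite -(subnKC (ltnW kt)); have : (0 < t - k <= k.+2)%N by lia.
move: (t - k)%N => s /andP[s0 sk2]; have [sk|ks] := leqP s k.
  by apply: high; rewrite s0.
by have [->|->] : s = k.+1 \/ s = k.+2 by lia.
Qed.

Lemma rec_ndvd3_v12_eq0 : ~~ (3 %| k)%N -> v 0 = 0 -> v 1 = 0 /\ v 2 = 0.
Proof.
move=> k3 v0; have [k1|k_le1] := ltnP 1 k.
  have := sum3_wrap_left k1; have := sum3_wrap_right k1.
  have [km|km] : (k = 1 %[mod 3] \/ k = 2 %[mod 3])%N by move: k3; rewrite /dvdn; lia.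
    have := sum3 (x := 1) isT ltac:(lia).
    rewrite (v_eq_mod3 (s := 1) (t := k)) ?(v_eq_mod3 (s := 3) (t := k.-1)); try lia.
    by split; lra.
  rewrite (v_eq_mod3 (s := 2) (t := k)) ?(v_eq_mod3 (s := 1) (t := k.-1)); try lia.
  by split; lra.
have k_eq1 : k = 1%N by lia.
have := rec_low (i := 0) k_gt0; have := rec_mid0; have := rec_mid1.
have := rec_high (t := 2) ltac:(lia); rewrite k_eq1 !add1n v0.
by split; lra.
Qed.

End KernelRecurrence.

Definition kvec_ends (k t : nat) : rat :=
  if (t == 0)%N || (t == k + 1)%N || (t == k + k.+2)%N then 1 else 0.

Definition pattern3 (x y : rat) (t : nat) : rat :=
  if (t %% 3 == 0)%N then - x - y else if (t %% 3 == 1)%N then x else y.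

(* Beyond k the values are those forced by [rec_low]: v_(k+i+1) = v_i + v_(i+1),
   which is x for i = 0 (as v_0 = 0) and minus the next pattern value for i > 0. *)
Definition kvec_periodic (k : nat) (x y : rat) (t : nat) : rat :=
  if t == 0%N then 0 else if (t <= k)%N then pattern3 x y t
  else if t == (k + 1)%N then x else - pattern3 x y (t - k).+1.

Lemma kvec_ends_rec k : (0 < k)%N ->
  forall j, (j < 2 * k + 2)%N -> drowA (2 * k + 2) k (kvec_ends k) j = 0.
Proof. by move=> k0 j jk; rewrite /drowA /kvec_ends; case_ifs; lra. Qed.

Lemma kvec_ends_rowA0 k : rowA (2 * k + 2) k (kvec_ends k) 0 = 0.
Proof.
rewrite rowA0; last lia.
rewrite big_nat_cond big1 ?oppr0 // => i /andP[/andP[i1 ik] _].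
by rewrite /kvec_ends; case_ifs.
Qed.

Lemma sum_pattern3 x y q : \sum_(1 <= i < (3 * q).+1) pattern3 x y i = 0.
Proof.
elim: q => [|q IH]; first by rewrite big_geq.
rewrite mulnSr addn3 big_nat_recr // big_nat_recr // big_nat_recr //= IH.
by rewrite /pattern3; case_ifs; lra.
Qed.

Lemma kvec_periodic_rec k x y : (0 < k)%N -> (3 %| k)%N ->
  forall j, (j < 2 * k + 2)%N -> drowA (2 * k + 2) k (kvec_periodic k x y) j = 0.
Proof.
by move=> k0 k3 j jk; rewrite /drowA /kvec_periodic /pattern3; case_ifs; lra.
Qed.

Lemma kvec_periodic_rowA0 k x y : (3 %| k)%N ->
  rowA (2 * k + 2) k (kvec_periodic k x y) 0 = 0.
Proof.
move=> /dvdnP[q ->]; rewrite (mulnC q 3) rowA0; last lia.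
rewrite (eq_big_nat _ _ (F2 := pattern3 x y)) ?sum_pattern3 ?oppr0 //.
move=> i /andP[i1 iq].
by rewrite /kvec_periodic; case_ifs.
Qed.

Lemma rank_kermx_Amat_ndvd3 k : (0 < k)%N -> ~~ (3 %| k)%N ->
  \rank (kermx (Amat (2 * k + 2).+1 k)) = 1%N.
Proof.
move=> k0 k3; apply: (mxrank_ker_section (S := pid_mx 1)
  (B := \matrix_(s < 1, i < (2 * k + 2).+1) kvec_ends k i)).
- apply/(mulmx_Amat_eq0 _ _ (fun=> kvec_ends k)) => s.
  by split; [exact: kvec_ends_rowA0 | exact: kvec_ends_rec k0].
- by apply: (@matrix_mul_pid_mx _ 1 _ (fun=> kvec_ends k)) => // s s'; rewrite !ord1.
move=> u uA0 uS0; have v_rec := row_ker_Amat_rec uA0.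
have v0 := pid_mx_coord_eq0 uS0 isT (isT : 0 < 1)%N.
have [v1 v2] := rec_ndvd3_v12_eq0 k0 v_rec k3 v0.
by apply/rowP => j; rewrite mxE -[j]inord_val (rec_vanish k0 v_rec v0 v1 v2) // -ltnS.
Qed.

Definition kvec3 (k : nat) (s : 'I_3) : nat -> rat :=
  if s == 0%N :> nat then kvec_ends k
  else if s == 1%N :> nat then kvec_periodic k 1 0 else kvec_periodic k 0 1.

Lemma rank_kermx_Amat_dvd3 k : (0 < k)%N -> (3 %| k)%N ->
  \rank (kermx (Amat (2 * k + 2).+1 k)) = 3%N.
Proof.
move=> k0 k3; have k_ge3 : (3 <= k)%N by case/dvdnP: k3 k0 => q ->; lia.
apply: (mxrank_ker_section (S := pid_mx 3)
  (B := \matrix_(s < 3, i < (2 * k + 2).+1) kvec3 k s i)).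
- apply/(mulmx_Amat_eq0 _ _ (kvec3 k)) => s; rewrite /kvec3.
  case: ifP => _; first by split; [exact: kvec_ends_rowA0 | exact: kvec_ends_rec k0].
  by case: ifP => _;
    (split; [exact: kvec_periodic_rowA0 | exact: kvec_periodic_rec k0 k3]).
- apply: (@matrix_mul_pid_mx _ 3 _ (kvec3 k)) => [|s s']; first lia.
  case: s => -[|[|[|//]]] ?; case: s' => -[|[|[|//]]] ? /=;
    by rewrite /kvec3 /kvec_ends /kvec_periodic /pattern3 /=; case_ifs.
move=> u uA0 uS0; have v_rec := row_ker_Amat_rec uA0.
have v_coord t : (t < 3)%N -> u 0 (inord t) = 0.
  by move=> t3; apply: pid_mx_coord_eq0 uS0 _ t3; lia.
by apply/rowP => j; rewrite mxE -[j]inord_val (rec_vanish k0 v_rec) ?v_coord // -ltnS.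
Qed.

Theorem theorem8p3 (k : nat) : (1 <= k)%N ->
  Nnull (2 * k + 3) k = (if (3 %| k)%N then 3 else 1)%N.
Proof.
move=> k0; rewrite /Nnull -mxrank_ker addnS.
case: ifP => k3; first exact: rank_kermx_Amat_dvd3.
by apply: rank_kermx_Amat_ndvd3; rewrite ?k3.
Qed.
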